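(* Assume $0<\theta_1\le\dots\le\theta_N$, $m_i>0$, $\sigma>0$, $p>0$, and let $\mathbf y=\mathbf y^*\in\mathbb R^N_+$ be the (unique) positive solution of $$\sum_{k=1}^N m_k(y_k-y_i)+\sigma(\theta_i-y_i^p)y_i=0,\qquad i=1,\dots,N.$$ Let $\bar y=\frac1M\sum_i m_iy_i$. Then there exists an index $1\le i_0\le N$ such that $$\theta_i\le y_i^p\ \text{ for } i\le i_0,\qquad y_{i_0}\le\bar y\le y_{i_0+1},\qquad y_i^p\le\theta_i\ \text{ for } i\ge i_0+1,$$ where conditions involving the index $i_0+1$ are vacuous if $i_0=N$.
   Context: $\mathbb R^N_+$ denotes the set of vectors with all coordinates strictly positive; $M=\sum_i m_i$. *)

(* R : realType, indices 'I_N (0-based). *)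
From HB Require Import structures.
From mathcomp Require Import all_boot all_order all_algebra.
From mathcomp Require Import reals exp.
Set Implicit Arguments. Unset Strict Implicit. Unset Printing Implicit Defensive.
Import Order.TTheory GRing.Theory Num.Theory.
Local Open Scope ring_scope.

Definition wmean (R : realType) (N : nat) (m y : 'I_N -> R) : R :=
  (\sum_(i < N) m i * y i) / (\sum_(i < N) m i).

From HB Require Import structures.
From mathcomp Require Import all_boot all_order all_algebra.
From mathcomp Require Import reals exp ring.
Set Implicit Arguments.
Unset Strict Implicit.
Unset Printing Implicit Defensive.
Import Order.TTheory GRing.Theory Num.Theory.
Local Open Scope ring_scope.

(* Since
   sum_k m_k (y_k - y_i) = M (ybar - y_i), the i-th equilibrium equation reads
       M (ybar - y_i) = sigma y_i (y_i^p - theta_i),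
   so, as sigma y_i > 0, an index lying at or below the mean is saturated
   (theta_i <= y_i^p) and an index strictly above it is strictly unsaturated
   (y_i^p < theta_i).  Combined with the monotonicity of theta and of t |-> t^p
   this shows that the indices below the mean form an initial segment
   {0, ..., i0}; it is nonempty because a weighted mean is never smaller than
   every entry.  Its last element i0 is the index of the theorem. *)

Lemma powR_lt_inv {R : realType} {p a b : R} :
  0 <= p -> 0 <= a -> 0 <= b -> a `^ p < b `^ p -> a < b.
Proof.
move=> p_ge0 a_ge0 b_ge0; apply: contraTT; rewrite -!leNgt => le_ba.
by apply: ge0_ler_powR; rewrite ?nnegrE.
Qed.

Section WeightedMean.
Variables (R : realType) (N : nat) (m y : 'I_N -> R).
Hypothesis N_gt0 : (0 < N)%N.
Hypothesis m_gt0 : forall i, 0 < m i.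

Let i_first : 'I_N := Ordinal N_gt0.

Lemma total_mass_gt0 : 0 < \sum_(k < N) m k.
Proof.
rewrite (bigD1 i_first) //=; apply: ltr_wpDr; last exact: m_gt0.
by apply: sumr_ge0 => k _; exact: ltW.
Qed.

Lemma total_mass_wmean : (\sum_(k < N) m k) * wmean m y = \sum_(k < N) m k * y k.
Proof. by rewrite /wmean mulrC divfK // gt_eqF // total_mass_gt0. Qed.

Lemma sum_deviation i :
  \sum_(k < N) m k * (y k - y i) = (\sum_(k < N) m k) * (wmean m y - y i).
Proof.
rewrite mulrBr total_mass_wmean mulr_suml -sumrB.
by apply: eq_bigr => k _; rewrite mulrBr.
Qed.

Lemma exists_le_wmean : exists i, y i <= wmean m y.
Proof.
apply/existsP; apply: contraT => /existsPn all_above.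
suff : (\sum_(k < N) m k) * wmean m y < \sum_(k < N) m k * y k.
  by rewrite total_mass_wmean ltxx.
rewrite mulr_suml; apply: ltr_sum => [|k _].
  by apply/hasP; exists i_first; rewrite ?mem_index_enum.
by rewrite ltr_pM2l // ltNge.
Qed.

End WeightedMean.

Section Equilibrium.
Variables (R : realType) (N : nat) (theta m y : 'I_N -> R) (sigma p : R).
Hypothesis N_gt0 : (0 < N)%N.
Hypothesis theta_mono : forall i j : 'I_N, (i <= j)%N -> theta i <= theta j.
Hypothesis m_gt0 : forall i, 0 < m i.
Hypothesis sigma_gt0 : 0 < sigma.
Hypothesis p_ge0 : 0 <= p.
Hypothesis y_gt0 : forall i, 0 < y i.
Hypothesis y_eq : forall i : 'I_N,
  \sum_(k < N) m k * (y k - y i) + sigma * (theta i - y i `^ p) * y i = 0.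

Let M := \sum_(k < N) m k.
Let ybar := wmean m y.

Lemma equilibrium_balance i :
  M * (ybar - y i) = sigma * y i * (y i `^ p - theta i).
Proof.
apply/eqP; rewrite -subr_eq0; apply/eqP.
by rewrite -(y_eq i) sum_deviation // /M /ybar; ring.
Qed.

Let sigma_y_gt0 i : 0 < sigma * y i.
Proof. exact: mulr_gt0. Qed.

Lemma le_wmean_saturated i : y i <= ybar -> theta i <= y i `^ p.
Proof.
move=> le_y_mean; rewrite -subr_ge0 -(pmulr_rge0 _ (sigma_y_gt0 i)).
rewrite -equilibrium_balance mulr_ge0 ?subr_ge0 //.
exact/ltW/total_mass_gt0.
Qed.

Lemma gt_wmean_unsaturated i : ybar < y i -> y i `^ p < theta i.
Proof.
move=> gt_y_mean; rewrite -subr_lt0 -(pmulr_rlt0 _ (sigma_y_gt0 i)).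
by rewrite -equilibrium_balance pmulr_rlt0 ?subr_lt0 // total_mass_gt0.
Qed.

(* The indices at or below the mean form an initial segment: if j is below
   the mean but an earlier i were above it, then
   y_i^p < theta_i <= theta_j <= y_j^p, hence y_i < y_j <= ybar < y_i. *)
Lemma le_wmean_downward (i j : 'I_N) : (i <= j)%N -> y j <= ybar -> y i <= ybar.
Proof.
move=> le_ij le_yj_mean; rewrite leNgt; apply/negP => gt_yi_mean.
have pow_lt : y i `^ p < y j `^ p.
  apply: (lt_le_trans (gt_wmean_unsaturated gt_yi_mean)).
  exact: le_trans (theta_mono le_ij) (le_wmean_saturated le_yj_mean).
have := powR_lt_inv p_ge0 (ltW (y_gt0 i)) (ltW (y_gt0 j)) pow_lt.
by move/lt_le_trans/(_ le_yj_mean); rewrite ltNge (ltW gt_yi_mean).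
Qed.

End Equilibrium.

Theorem lemma5p5 (R : realType) (N : nat) (theta m y : 'I_N -> R) (sigma p : R)
  (hN : (0 < N)%N)
  (htheta_pos : forall i : 'I_N, 0 < theta i)
  (htheta_mono : forall i j : 'I_N, (i <= j)%N -> theta i <= theta j)
  (hm : forall i : 'I_N, 0 < m i)
  (hsigma : 0 < sigma) (hp : 0 < p)
  (hy_pos : forall i : 'I_N, 0 < y i)
  (hy_eq : forall i : 'I_N,
     \sum_(k < N) m k * (y k - y i) + sigma * (theta i - y i `^ p) * y i = 0) :
  exists i0 : 'I_N,
    (forall i : 'I_N, (i <= i0)%N -> theta i <= y i `^ p) /\
    y i0 <= wmean m y /\
    (forall j : 'I_N, nat_of_ord j = i0.+1 -> wmean m y <= y j) /\
    (forall i : 'I_N, (i0 < i)%N -> y i `^ p <= theta i).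
Proof.
have saturated := le_wmean_saturated hN hm hsigma hy_pos hy_eq.
have unsaturated := gt_wmean_unsaturated hN hm hsigma hy_pos hy_eq.
have downward :=
  le_wmean_downward hN htheta_mono hm hsigma (ltW hp) hy_pos hy_eq.
have [i1 le_i1_mean] := exists_le_wmean y hN hm.
have [i0 le_i0_mean i0_last] :=
  @arg_maxnP _ i1 (fun i => y i <= wmean m y) (@nat_of_ord N) le_i1_mean.
have above_after_i0 (i : 'I_N) : (i0 < i)%N -> wmean m y < y i.
  move=> lt_i0_i; rewrite ltNge; apply: contraTN lt_i0_i => /i0_last.
  by rewrite -leqNgt.
exists i0; split; [|split; [|split]].
- by move=> i le_i_i0; apply/saturated/(downward _ _ le_i_i0).
- exact: le_i0_mean.
- by move=> j j_next; apply/ltW/above_after_i0; rewrite j_next.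
- by move=> i lt_i0_i; apply/ltW/unsaturated/above_after_i0.
Qed.
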